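(* Let $M_k$ be a Bott tower with non-negative Bott numbers $c_{i,j}\ge 0$, and let $D=\sum_{i=1}^k a_iD_{k+i}$ ($a_i\in\mathbb{Z}$) be a $T$-invariant divisor on $M_k$. Then $D$ is nef and big if and only if $a_k>0$, $a_i\ge 0$ for $1\le i<k$, and for every $i\in\{1,\dots,k-1\}$ with $a_i=0$, at least one of the numbers $c_{i,j}$ ($j>i$) is nonzero.
   Context: Given integers $c_{i,j}$ ($1\le i<j\le k$) (Bott numbers), let $e_1,\dots,e_k$ be the standard basis of $\mathbb{Z}^k$. The Bott tower $M_k$ is the nonsingular projective toric variety whose fan has the $2k$ rays generated by $v_i=e_i$ ($1\le i\le k$), $v_{k+i}=-e_i+c_{i,i+1}e_{i+1}+\cdots+c_{i,k}e_k$ ($1\le i\le k-1$), $v_{2k}=-e_k$, and whose maximal cones are the $2^k$ cones generated by $k$ of these vectors containing, for each $i$, exactly one of $v_i,v_{k+i}$. $D_j$ denotes the torus-invariant prime divisor of $v_j$; the Picard group is free on $D_{k+1},\dots,D_{2k}$, with $D_i\sim D_{k+i}-\sum_{l<i}c_{l,i}D_{k+l}$. *)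

From HB Require Import structures.
From mathcomp Require Import all_boot all_order all_algebra.
Set Implicit Arguments. Unset Strict Implicit. Unset Printing Implicit Defensive.
Import Order.TTheory GRing.Theory Num.Theory.
Local Open Scope ring_scope.

(* Rays of the Bott tower fan, indexed by 'I_k * bool:
   (i, false) is v_{i+1} = e_{i+1};
   (i, true)  is v_{k+i+1} = -e_{i+1} + sum_{j>i} c_{i,j} e_j
   (for i = k-1 this is -e_k).  Indices are 0-based. *)
Definition bott_ray (k : nat) (c : 'I_k -> 'I_k -> int) (r : 'I_k * bool)
  : 'I_k -> int :=
  fun j => if r.2 then (if j == r.1 then -1 else if (r.1 < j)%N then c r.1 j else 0)
           else (j == r.1)%:Z.

(* Coefficient of D = sum_i a_i D_{k+i} on the prime divisor of ray r. *)
Definition bott_divcoef (k : nat) (a : 'I_k -> int) (r : 'I_k * bool) : int :=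
  if r.2 then a r.1 else 0.

(* Maximal cones are indexed by s : 'I_k -> bool, the cone containing
   v_{i+1} if s i = false and v_{k+i+1} if s i = true. *)
Definition bott_in_cone (k : nat) (s : 'I_k -> bool) (r : 'I_k * bool) : bool :=
  s r.1 == r.2.

Definition zpair (k : nat) (m v : 'I_k -> int) : int := \sum_(j < k) m j * v j.

(* Nef (CLS Thm 6.1.7/6.1.10, smooth complete fan): for every maximal cone
   sigma, the Cartier datum m_sigma (with <m_sigma,v_rho> = -d_rho on the rays
   of sigma) lies in the polyhedron P_D, i.e. <m_sigma,v_rho> >= -d_rho for
   all rays rho. *)
Definition bott_nef (k : nat) (c : 'I_k -> 'I_k -> int) (a : 'I_k -> int) : Prop :=
  forall s : 'I_k -> bool, exists m : 'I_k -> int,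
    (forall r, bott_in_cone s r -> zpair m (bott_ray c r) = - bott_divcoef a r) /\
    (forall r, - bott_divcoef a r <= zpair m (bott_ray c r)).

(* Big: the polytope P_D = {m in M_R | <m,v_rho> >= -d_rho} is full
   dimensional (vol(D) = k! vol(P_D)), i.e. has a point (rational suffices)
   satisfying all defining inequalities strictly. *)
Definition bott_big (k : nat) (c : 'I_k -> 'I_k -> int) (a : 'I_k -> int) : Prop :=
  exists m : 'I_k -> rat, forall r : 'I_k * bool,
    - (bott_divcoef a r)%:~R < \sum_(j < k) m j * (bott_ray c r j)%:~R.

From HB Require Import structures.
From mathcomp Require Import all_boot all_order all_algebra zify lra.
Set Implicit Arguments.
Unset Strict Implicit.
Unset Printing Implicit Defensive.
Import Order.TTheory GRing.Theory Num.Theory.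
Local Open Scope ring_scope.

(* Writing U_i(m) = sum_{j>i} c_{i,j} m_j, the polytope P_D is cut out by
   0 <= m_i <= a_i + U_i(m), and U_i only involves coordinates j > i.  Hence
   both the Cartier datum of a maximal cone and an interior point of P_D can
   be built by back substitution from i = k down to 1: m_i = a_i + U_i(m) or 0
   according to the cone, resp. m_i = (a_i + U_i(m)) / 2.  When c, a >= 0 the
   first lies in P_D; the second is interior as soon as every a_i + U_i(m) is
   positive, which is what a_k > 0 and the condition on the c_{i,j} give.
   Conversely, the cone whose only ray of the form v_{k+j} is v_{k+i} has
   Cartier datum with m_i = a_i, so nefness forces a_i >= 0; and an interior
   point gives 0 < m_i < a_i whenever all c_{i,j} (j > i) vanish. *)

Lemma ord_down_ind k (P : 'I_k -> Prop) :
  (forall j : 'I_k, (forall l : 'I_k, (j < l)%N -> P l) -> P j) ->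
  forall j, P j.
Proof.
move=> IH; suff Pn n (j : 'I_k) : (k <= j + n)%N -> P j.
  by move=> j; apply: (Pn k); lia.
elim: n j => [|n IHn] j hj; apply: IH => l hl; first by have := ltn_ord l; lia.
by apply: IHn; lia.
Qed.

Section TriangularFixpoint.

Variables (T : Type) (k : nat) (f : 'I_k -> ('I_k -> T) -> T).
Hypothesis f_upper : forall (j : 'I_k) (m m' : 'I_k -> T),
  (forall l : 'I_k, (j < l)%N -> m l = m' l) -> f j m = f j m'.

Let step (m : 'I_k -> T) (j : 'I_k) := f j m.

Lemma iter_step_stable m0 n (j : 'I_k) :
  (k <= j + n)%N -> iter n step m0 j = iter n.+1 step m0 j.
Proof.
elim: n j => [|n IHn] j hj; first by have := ltn_ord j; lia.
by apply: f_upper => l hl; apply: IHn; lia.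
Qed.

Lemma upper_triangular_fixpoint (x0 : T) :
  exists m : 'I_k -> T, forall j, m j = f j m.
Proof.
by exists (iter k step (fun=> x0)) => j; apply: iter_step_stable; lia.
Qed.

End TriangularFixpoint.

Section BottTower.

Variables (k : nat) (c : 'I_k -> 'I_k -> int).

Definition upper_sum (R : pzRingType) (m : 'I_k -> R) (i : 'I_k) : R :=
  \sum_(j < k | (i < j)%N) m j * (c i j)%:~R.

Definition bott_pair (R : pzRingType) (m : 'I_k -> R) (r : 'I_k * bool) : R :=
  \sum_(j < k) m j * (bott_ray c r j)%:~R.

Lemma bott_pairE (R : pzRingType) (m : 'I_k -> R) r :
  bott_pair m r = if r.2 then upper_sum m r.1 - m r.1 else m r.1.
Proof.
case: r => i [] /=; rewrite /bott_pair (bigD1 i) //= /bott_ray /= eqxx.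
  rewrite mulrN1z mulrN1 addrC /upper_sum; congr (_ - _).
  rewrite [LHS]big_mkcond [RHS]big_mkcond /=; apply: eq_bigr => j _.
  by case: eqP => [->|_]; rewrite ?ltnn //; case: ifP; rewrite ?mulr0.
rewrite mulr1 big1 ?addr0 // => j /negbTE ji.
by rewrite ji mulr0.
Qed.

Lemma zpair_bott_ray (m : 'I_k -> int) r :
  zpair m (bott_ray c r) = bott_pair m r.
Proof. by apply: eq_bigr => j _; rewrite intz. Qed.

Lemma upper_sum_eq (R : pzRingType) (m m' : 'I_k -> R) (i : 'I_k) :
  (forall l : 'I_k, (i < l)%N -> m l = m' l) -> upper_sum m i = upper_sum m' i.
Proof. by move=> eq_m; apply: eq_bigr => l /eq_m ->. Qed.

Variable a : 'I_k -> int.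

Lemma bott_facet_le (R : realDomainType) (m : 'I_k -> R) r :
  (- (bott_divcoef a r)%:~R <= bott_pair m r) =
  if r.2 then m r.1 <= (a r.1)%:~R + upper_sum m r.1 else 0 <= m r.1.
Proof.
rewrite bott_pairE /bott_divcoef; case: r.2; last by rewrite oppr0.
by apply/idP/idP => ?; lra.
Qed.

Lemma bott_facet_lt (R : realDomainType) (m : 'I_k -> R) r :
  (- (bott_divcoef a r)%:~R < bott_pair m r) =
  if r.2 then m r.1 < (a r.1)%:~R + upper_sum m r.1 else 0 < m r.1.
Proof.
rewrite bott_pairE /bott_divcoef; case: r.2; last by rewrite oppr0.
by apply/idP/idP => ?; lra.
Qed.

Lemma bott_nef_coef_ge0 : bott_nef c a -> forall i, 0 <= a i.
Proof.
move=> nef i; have [m [cone_eq facet_le]] := nef (pred1 i).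
have m_eq r :
    bott_in_cone (pred1 i) r -> bott_pair m r = - (bott_divcoef a r)%:~R.
  by move=> /cone_eq; rewrite zpair_bott_ray intz.
have m0 j : j != i -> m j = 0.
  move=> ji; have := m_eq (j, false).
  by rewrite bott_pairE /bott_in_cone /= (negbTE ji) oppr0; apply.
have U0 : upper_sum m i = 0.
  by rewrite /upper_sum big1 // => l il; rewrite m0 ?mul0r // neq_ltn il orbT.
have := m_eq (i, true).
rewrite bott_pairE /bott_in_cone /= eqxx U0 intz => /(_ isT).
have := facet_le (i, false).
by rewrite zpair_bott_ray bott_pairE /bott_divcoef /= oppr0; lra.
Qed.

Lemma bott_big_coef_gt0_or_upper : bott_big c a ->
  forall i, 0 < a i \/ exists j : 'I_k, (i < j)%N /\ c i j != 0.
Proof.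
move=> [m facet_lt] i.
case: (boolP [exists j : 'I_k, (i < j)%N && (c i j != 0)]).
  by move=> /existsP[j /andP[ij cij]]; right; exists j.
move=> /existsPn c0; left.
have U0 : upper_sum m i = 0.
  rewrite /upper_sum big1 // => j ij.
  by have := c0 j; rewrite ij negbK => /eqP ->; rewrite mulr0.
have := facet_lt (i, true); have := facet_lt (i, false).
rewrite -/(bott_pair m _) !bott_facet_lt /= U0 addr0 => m_gt0 m_lt.
by rewrite -(ltr0z rat); exact: lt_trans m_gt0 m_lt.
Qed.

Hypothesis c_ge0 : forall i j : 'I_k, (i < j)%N -> 0 <= c i j.

Lemma upper_sum_ge0 (R : numDomainType) (m : 'I_k -> R) (i : 'I_k) :
  (forall l : 'I_k, (i < l)%N -> 0 <= m l) -> 0 <= upper_sum m i.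
Proof.
by move=> m_ge0; apply: sumr_ge0 => l il; rewrite mulr_ge0 ?ler0z ?m_ge0 ?c_ge0.
Qed.

Lemma upper_sum_gt0 (R : numDomainType) (m : 'I_k -> R) (i : 'I_k) :
  (forall l : 'I_k, (i < l)%N -> 0 < m l) ->
  (exists j : 'I_k, (i < j)%N /\ c i j != 0) -> 0 < upper_sum m i.
Proof.
move=> m_gt0 [j [ij cij]]; rewrite /upper_sum (bigD1 j) //=.
apply: ltr_pwDl; first by rewrite mulr_gt0 ?m_gt0 // ltr0z lt_def cij c_ge0.
apply: sumr_ge0 => l /andP[il _].
by rewrite mulr_ge0 ?ler0z ?c_ge0 // ltW ?m_gt0.
Qed.

Hypothesis a_ge0 : forall i, 0 <= a i.

Lemma bott_nef_of_coef_ge0 : bott_nef c a.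
Proof.
move=> s; pose f j (m : 'I_k -> int) := if s j then a j + upper_sum m j else 0.
have [|m m_eq] := @upper_triangular_fixpoint _ _ f _ 0.
  by move=> j m m' eq_m; rewrite /f (upper_sum_eq eq_m).
have m_ge0 : forall j, 0 <= m j.
  apply: ord_down_ind => j m_ge0; rewrite m_eq /f; case: (s j) => //.
  by rewrite addr_ge0 ?upper_sum_ge0.
exists m; split=> r; rewrite zpair_bott_ray.
  rewrite /bott_in_cone bott_pairE /bott_divcoef => /eqP <-.
  by case hs: (s r.1); rewrite m_eq /f hs; lra.
rewrite -[X in - X <= _]intz bott_facet_le; case: r.2; last exact: m_ge0.
have := upper_sum_ge0 (i := r.1) (fun l _ => m_ge0 l); have := a_ge0 r.1.
by case hs: (s r.1); rewrite m_eq /f hs intz; lra.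
Qed.

Hypothesis a_supported :
  forall i, 0 < a i \/ exists j : 'I_k, (i < j)%N /\ c i j != 0.

Lemma bott_big_of_coef_supported : bott_big c a.
Proof.
pose f j (m : 'I_k -> rat) := ((a j)%:~R + upper_sum m j) / 2.
have [|m m_eq] := @upper_triangular_fixpoint _ _ f _ 0.
  by move=> j m m' eq_m; rewrite /f (upper_sum_eq eq_m).
have S_gt0 : forall j, 0 < (a j)%:~R + upper_sum m j.
  apply: ord_down_ind => j S_gt0.
  have m_gt0 (l : 'I_k) : (j < l)%N -> 0 < m l.
    by move/S_gt0; rewrite m_eq /f; lra.
  have U_ge0 := upper_sum_ge0 (fun l jl => ltW (m_gt0 l jl)).
  have a_j_ge0 : 0 <= (a j)%:~R :> rat by rewrite ler0z.
  case: (a_supported j) => [| /(upper_sum_gt0 m_gt0) U_gt0]; last by lra.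
  by rewrite -(ltr0z rat); lra.
exists m => r; rewrite -/(bott_pair m r) bott_facet_lt m_eq /f.
by have := S_gt0 r.1; case: r.2; lra.
Qed.

End BottTower.

Lemma bott_coef_conditionsP k (c : 'I_k -> 'I_k -> int) (a : 'I_k -> int) :
  ((forall i, 0 <= a i) /\
   (forall i, 0 < a i \/ exists j : 'I_k, (i < j)%N /\ c i j != 0)) <->
  ((forall i : 'I_k, i.+1 = k -> 0 < a i) /\
   (forall i : 'I_k, (i.+1 < k)%N -> 0 <= a i) /\
   (forall i : 'I_k, (i.+1 < k)%N -> a i = 0 ->
      exists j : 'I_k, (i < j)%N /\ c i j != 0)).
Proof.
have no_upper (i j : 'I_k) : i.+1 = k -> ~ (i < j)%N by have := ltn_ord j; lia.
split=> [[a_ge0 a_supp] | [a_last [a_ge0 a_supp]]].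
  split; [|split] => // i.
    by move=> /no_upper ilast; case: (a_supp i) => // -[j [/ilast]].
  by move=> _ a0; case: (a_supp i) => //; rewrite a0 ltxx.
have i_lastE (i : 'I_k) : (k <= i.+1)%N -> i.+1 = k by have := ltn_ord i; lia.
split=> i; have [i_lt|/i_lastE i_last] := ltnP i.+1 k.
- exact: a_ge0.
- exact/ltW/a_last.
- have [a0|a_neq0] := eqVneq (a i) 0; first by right; apply: a_supp.
  by left; rewrite lt_def a_neq0 a_ge0.
- by left; apply: a_last.
Qed.

Theorem theorem3p8 (k : nat) (hk : (0 < k)%N) (c : 'I_k -> 'I_k -> int)
  (hc : forall i j : 'I_k, (i < j)%N -> 0 <= c i j) (a : 'I_k -> int) :
  (bott_nef c a /\ bott_big c a) <->
  ((forall i : 'I_k, i.+1 = k -> 0 < a i) /\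
   (forall i : 'I_k, (i.+1 < k)%N -> 0 <= a i) /\
   (forall i : 'I_k, (i.+1 < k)%N -> a i = 0 ->
      exists j : 'I_k, (i < j)%N /\ c i j != 0)).
Proof.
rewrite -bott_coef_conditionsP; split=> [[nef big] | [a_ge0 a_supp]].
  by split; [apply: bott_nef_coef_ge0 | apply: bott_big_coef_gt0_or_upper].
by split; [apply: bott_nef_of_coef_ge0 | apply: bott_big_of_coef_supported].
Qed.
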